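(* Let $M_1,M_2$ be modules in the class $\mathcal C$ with structural exact sequences $0\to\operatorname{Lie}_E(K_\infty)/\Lambda_s\xrightarrow{\iota_s}M_s\to H_s\to0$ ($s=1,2$). Let $\Gamma:K_\infty^n\to K_\infty^n$ be an $\mathbb{F}_q[G]$-linear map given by an everywhere convergent power series \[\Gamma(\mathbf z)=\mathbf z+D_1\mathbf z^{(1)}+D_2\mathbf z^{(2)}+\cdots,\qquad D_i\in M_n(K_\infty),\] where $\mathbf z^{(i)}$ denotes the entrywise $q^i$-th power. Assume $\Gamma(\Lambda_1)\subseteq\Lambda_2$, let $\widetilde\Gamma:K_\infty^n/\Lambda_1\to K_\infty^n/\Lambda_2$ be the induced map, and let $\gamma:M_1\to M_2$ be a continuous $\mathbb{F}_q[G]$-linear morphism with $\iota_2^{-1}\circ\gamma\circ\iota_1=\widetilde\Gamma$ on $t^{-\ell}\mathcal{O}_{K_\infty}^n$. Then $\gamma$ is infinitely tangent to the identity.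
   Context: Let $p$ be a prime, $q$ a power of $p$, $A=\mathbb F_q[t]$, $k=\mathbb F_q(t)$, $k_\infty=\mathbb F_q((t^{-1}))$. Let $F/k$ be finite separable and $K/F$ finite Galois with abelian group $G$; $K_\infty=K\otimes_kk_\infty$, $F_\infty=F\otimes_kk_\infty$. $E$ is an $n$-dimensional $t$-module over the integral closure $\mathcal O_F$ of $A$ in $F$: $\phi_E:A\to M_n(\mathcal O_F)\{\tau\}$ with $\phi_E(t)=d_E[t]+\sum_{i\ge1}M_i\tau^i$ (finite sum), $d_E[t]=tI_n+N$, $N$ nilpotent; $\operatorname{Lie}_E(K_\infty)$ is $K_\infty^n$ with $a\in A$ acting by the $\tau^0$-coefficient $d_E[a]$ of $\phi_E(a)$, a $k_\infty[G]$-module. An $A[G]$-lattice is an $A[G]$-submodule of $\operatorname{Lie}_E(K_\infty)$, free over $A$ of rank $\dim_{k_\infty}\operatorname{Lie}_E(K_\infty)$, spanning over $k_\infty$. The class $\mathcal C$ consists of compact $G$-cohomologically trivial $A[G]$-modules $M$ with an exact sequence of topological $A[G]$-modules $0\to\operatorname{Lie}_E(K_\infty)/\Lambda\xrightarrow{\iota}M\to H\to0$, $\Lambda$ an $A[G]$-lattice, $H$ finite. Equip $K_\infty$ with the sup norm $\|\cdot\|$ over its components normalized by $\|t\|=q$, extended to $K_\infty^n$ by the max over coordinates; $\mathcal O_{K_\infty}=\{x:\|x\|\le1\}$. Fix $\ell$ with $t^{-\ell}\mathcal O_{K_\infty}^n\cap\Lambda_s=0$ for $s=1,2$ and identify $t^{-i}\mathcal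 O_{K_\infty}^n$ ($i\ge\ell$) with its image in $M_s$ via $\iota_s$. A continuous $\mathbb F_q[G]$-linear $\gamma:M_1\to M_2$ is infinitely tangent to the identity if for every $N\ge0$ there is $i\ge\ell$ such that $\iota_2^{-1}\circ\gamma\circ\iota_1$ restricts to a bijective isometry $\gamma_i$ of $t^{-i}\mathcal O_{K_\infty}^n$ onto itself with $\|\gamma_i(x)-x\|\le q^{-N}\|x\|$ for all $x\in t^{-i}\mathcal O_{K_\infty}^n$. *)

From HB Require Import structures.
From mathcomp Require Import all_boot all_order all_algebra all_fingroup.
From mathcomp Require Import all_classical all_reals all_analysis.
Set Implicit Arguments. Unset Strict Implicit. Unset Printing Implicit Defensive.
Import Order.TTheory GRing.Theory Num.Theory.
Local Open Scope ring_scope.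

(*  kinf  : k_oo = F_q((1/t)), given with cF : Fq -> kinf and tk = t          *)
(*  Kinf  : K_oo = K (x)_k k_oo, a k_oo-algebra via emb : kinf -> Kinf        *)
(*  Nmat  : the nilpotent part N of d_E[t] = t I_n + N                        *)

Section Setting.
Context (Fq : finFieldType) (R : realType) (kinf : fieldType)
  (Kinf : comUnitRingType) (gT : finGroupType)
  (cF : {rmorphism Fq -> kinf}) (emb : {rmorphism kinf -> Kinf})
  (tk : kinf) (nrm : Kinf -> R) (actK : gT -> {rmorphism Kinf -> Kinf})
  (n d : nat) (Nmat : 'M[Kinf]_n).

Definition qF : nat := #|Fq|.
Definition tK : Kinf := emb tk.
Definition absk (a : kinf) : R := nrm (emb a).

Definition complete_for (T : zmodType) (nm : T -> R) : Prop :=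
  forall u : nat -> T,
    (forall e : R, 0 < e -> exists N : nat, forall i j : nat,
        (N <= i)%N -> (N <= j)%N -> nm (u i - u j) < e) ->
    exists l : T, forall e : R, 0 < e -> exists N : nat, forall i : nat,
        (N <= i)%N -> nm (u i - l) < e.

(* k_oo is a complete discretely valued field with uniformizer 1/t,
   residue field F_q, and |t| = q;  K_oo is a finite free k_oo-algebra of
   dimension d, with a power-multiplicative ultrametric norm extending |.|,
   complete; G is a finite abelian group acting faithfully on K_oo by
   k_oo-algebra automorphisms, isometrically. *)
Definition setting_axioms : Prop :=
  [/\ [/\ (forall x : Kinf, 0 <= nrm x /\ (nrm x = 0 <-> x = 0)),
      (forall x y : Kinf, nrm (x + y) <= Num.max (nrm x) (nrm y)),
      (forall (a : kinf) (x : Kinf), nrm (emb a * x) = absk a * nrm x),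
      (forall x y : Kinf, nrm (x * y) <= nrm x * nrm y) &
      (forall (x : Kinf) (m : nat), nrm (x ^+ m.+1) = nrm x ^+ m.+1)],
      [/\ absk tk = qF%:R,
      (forall a : kinf, a != 0 -> exists m : int, absk a = qF%:R ^ m) &
      (forall a : kinf, absk a <= 1 -> exists c : Fq, absk (a - cF c) < 1)] &
      [/\ complete_for absk, complete_for nrm,
          (exists b : 'I_d -> Kinf,
             (forall x : Kinf, exists a : 'I_d -> kinf,
                 x = \sum_(j < d) emb (a j) * b j) /\
             (forall a : 'I_d -> kinf,
                 \sum_(j < d) emb (a j) * b j = 0 -> forall j, a j = 0)) &
          [/\ abelian [set: gT] /\ (forall x, actK 1 x = x),
              (forall g h x, actK (g * h)%g x = actK g (actK h x)),
              (forall g, (forall x, actK g x = x) -> g = 1%g),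
              (forall g a, actK g (emb a) = emb a) &
              (forall g x, nrm (actK g x) = nrm x)]]].

Definition tmodule_axioms : Prop :=
  Nmat ^+ n = 0 /\ (forall g i j, actK g (Nmat i j) = Nmat i j).

Definition dEt : 'M[Kinf]_n := tK%:M + Nmat.

(* action of a in A = F_q[t] on Lie_E(K_oo) = K_oo^n via d_E[a] = a(d_E[t]) *)
Definition dEact (a : {poly Fq}) (v : 'cV[Kinf]_n) : 'cV[Kinf]_n :=
  \sum_(i < size a) emb (cF a`_i) *: (dEt ^+ i *m v).

Definition gv (g : gT) (v : 'cV[Kinf]_n) : 'cV[Kinf]_n := map_mx (actK g) v.

Definition nrmv (v : 'cV[Kinf]_n) : R := \big[Num.max/0]_(i < n) nrm (v i 0).

Definition tball (i : int) (v : 'cV[Kinf]_n) : Prop :=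
  exists y : 'cV[Kinf]_n, nrmv y <= 1 /\ v = tK ^ (- i) *: y.

(* A[G]-lattice in Lie_E(K_oo): G-stable, free over A (acting through d_E)
   of rank n*d = dim_{k_oo} Lie_E(K_oo), with a basis spanning over k_oo *)
Definition AG_lattice (L : 'cV[Kinf]_n -> Prop) : Prop :=
  (forall g v, L v -> L (gv g v)) /\
  exists b : 'I_(n * d) -> 'cV[Kinf]_n,
    [/\ (forall v, L v <-> exists a : 'I_(n * d) -> {poly Fq},
                             v = \sum_(j < n * d) dEact (a j) (b j)),
        (forall a : 'I_(n * d) -> {poly Fq},
            \sum_(j < n * d) dEact (a j) (b j) = 0 -> forall j, a j = 0) &
        (forall v, exists c : 'I_(n * d) -> kinf,
            v = \sum_(j < n * d) emb (c j) *: b j)].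

Section Cohomology.
Context (M : zmodType) (actM : gT -> M -> M).

Definition merge_at (i : nat) (s : seq gT) : seq gT :=
  take i.-1 s ++ (nth 1%g s i.-1 * nth 1%g s i)%g :: drop i.+1 s.

(* inhomogeneous coboundary of a k-cochain f, evaluated at (g_1..g_{k+1}) *)
Definition cobound (k : nat) (f : seq gT -> M) (s : seq gT) : M :=
  actM (head 1%g s) (f (behead s))
  + \sum_(1 <= i < k.+1) f (merge_at i s) *~ ((-1) ^+ i)
  + f (take k s) *~ ((-1) ^+ k.+1).

(* H^k(H, M) = 0 for every subgroup H and every k >= 1 *)
Definition cohom_trivial : Prop :=
  forall (H : {group gT}) (k : nat), (0 < k)%N ->
  forall f : seq gT -> M,
    (forall s, size s = k.+1 -> all (fun g => g \in H) s -> cobound k f s = 0) ->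
    exists h : seq gT -> M,
      forall s, size s = k -> all (fun g => g \in H) s -> f s = cobound k.-1 h s.
End Cohomology.

(* M is in the class C, with structural sequence
   0 -> Lie_E(K_oo)/L --iota--> M -> H -> 0  (iota given on K_oo^n) *)
Definition in_class_C (M : topologicalZmodType) (aM : {poly Fq} -> M -> M)
  (actM : gT -> M -> M) (iota : 'cV[Kinf]_n -> M)
  (L : 'cV[Kinf]_n -> Prop) : Prop :=
  [/\ compact [set: M] /\ hausdorff_space M /\ cohom_trivial actM,
      [/\ (forall a x y, aM a (x + y) = aM a x + aM a y),
          (forall a b x, aM (a + b) x = aM a x + aM b x),
          (forall a b x, aM (a * b) x = aM a (aM b x)),
          (forall x, aM 1 x = x) &
          (forall a, continuous (aM a))],
      [/\ (forall x, actM 1%g x = x),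
          (forall g h x, actM (g * h)%g x = actM g (actM h x)),
          (forall g x y, actM g (x + y) = actM g x + actM g y),
          (forall g, continuous (actM g)) &
          (forall g a x, actM g (aM a x) = aM a (actM g x))],
      AG_lattice L &
      [/\ (forall v w, iota (v + w) = iota v + iota w) /\
          (forall a v, iota (dEact a v) = aM a (iota v)),
          (forall g v, iota (gv g v) = actM g (iota v)),
          (forall v, iota v = 0 <-> L v),
          (forall v (U : set M), nbhs (iota v) U ->
              exists2 e : R, 0 < e & forall w, nrmv (w - v) < e -> U (iota w)) &
          (* the cokernel H is finite *)
          (exists s : seq M, forall m : M,
              exists2 m0, m0 \in s & exists v, m = m0 + iota v)]].

Definition inf_tangent (M1 M2 : topologicalZmodType)
  (iota1 : 'cV[Kinf]_n -> M1) (iota2 : 'cV[Kinf]_n -> M2) (l : int)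
  (gamma : M1 -> M2) : Prop :=
  forall N : nat, exists i : int, l <= i /\
    exists gi : 'cV[Kinf]_n -> 'cV[Kinf]_n,
      [/\ (forall x, tball i x -> tball i (gi x) /\ gamma (iota1 x) = iota2 (gi x)),
          (forall x y, tball i x -> tball i y -> gi x = gi y -> x = y),
          (forall y, tball i y -> exists2 x, tball i x & gi x = y),
          (forall x y, tball i x -> tball i y -> nrmv (gi x - gi y) = nrmv (x - y)) &
          (forall x, tball i x -> nrmv (gi x - x) <= qF%:R ^- N * nrmv x)].

End Setting.

(* Evaluating the series at the
   standard basis vectors, which the Frobenius twists fix, shows that the D_i
   tend to 0, hence are bounded by some B; on the ball of radius s <= 1 every
   term then has norm at most B s |w|, and so does Gamma w - w by the
   ultrametric inequality.  On an ultrametric ball, an additive map with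
   |Gamma w - w| <= eps |w| and eps < 1 preserves norms (strict triangle
   inequality), and it is onto the ball because x |-> y - (Gamma x - x) is a
   contraction of ratio eps of a complete space.  Taking the ball
   t^-i O^n with i >= l and radius below s, gamma agrees there with Gamma. *)

From HB Require Import structures.
From mathcomp Require Import all_boot all_order all_algebra all_fingroup.
From mathcomp Require Import all_classical all_reals all_analysis.
From mathcomp Require Import lra ring.
Set Implicit Arguments.
Unset Strict Implicit.
Unset Printing Implicit Defensive.
Import Order.TTheory GRing.Theory Num.Theory.
Local Open Scope ring_scope.

Lemma exists_expr_lt (R : realType) (x e : R) :
  0 <= x < 1 -> 0 < e -> exists N : nat, x ^+ N < e.
Proof.
move=> /andP[x0 x1] e0; have x1' : `|x| < 1 by rewrite ger0_norm.
have [N _ HN] := cvgr0_norm_lt _ (cvg_expr x1') _ e0.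
by exists N; have := HN N (leqnn N); rewrite ger0_norm ?exprn_ge0.
Qed.

Lemma exists_exprz_le (R : realType) (q s : R) (l : int) :
  1 < q -> 0 < s -> exists i : int, l <= i /\ q ^ (- i) <= s.
Proof.
move=> q1 s0; have q0 : 0 < q := lt_trans ltr01 q1.
have qV01 : 0 <= q^-1 < 1 by rewrite invr_ge0 ltW //= invf_lt1.
have [N qN] := exists_expr_lt qV01 s0.
exists (N + `|l|)%N; split; first by rewrite (le_trans (lez_abs l)) // lez_nat leq_addl.
rewrite -exprz_inv; apply: le_trans (ltW qN).
have /andP[qV0 qV1] := qV01.
exact: (ler_wiXn2l qV0 (ltW qV1) (leq_addr _ _)).
Qed.

Definition ultrametric_abs (R : realType) (K : pzRingType) (nrm : K -> R) : Prop :=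
  [/\ forall x, 0 <= nrm x, forall x, nrm x = 0 <-> x = 0,
      forall x y, nrm (x + y) <= Num.max (nrm x) (nrm y),
      forall x, nrm (- x) = nrm x & forall x y, nrm (x * y) <= nrm x * nrm y].

Section UltrametricSupNorm.
Variables (R : realType) (K : comUnitRingType) (nrm : K -> R) (n : nat).
Hypothesis Hnrm : ultrametric_abs nrm.
Local Notation nv := (@nrmv R K nrm n).
Implicit Types (u v w : 'cV[K]_n) (A : 'M[K]_n) (b e : R).

Let nrm_ge0 x : 0 <= nrm x. Proof. by case: Hnrm. Qed.
Let nrm_eq0 x : nrm x = 0 -> x = 0. Proof. by case: Hnrm => _ /(_ x) []. Qed.
Let nrm0 : nrm 0 = 0. Proof. by case: Hnrm => _ /(_ 0) [_ ->]. Qed.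
Let nrmD x y : nrm (x + y) <= Num.max (nrm x) (nrm y). Proof. by case: Hnrm. Qed.
Let nrmN x : nrm (- x) = nrm x. Proof. by case: Hnrm. Qed.
Let nrmM x y : nrm (x * y) <= nrm x * nrm y. Proof. by case: Hnrm. Qed.

Lemma nrmv_ge0 v : 0 <= nv v.
Proof. by rewrite /nrmv; elim/big_ind: _ => // x y; rewrite le_max => ->. Qed.

Lemma ler_nrmv v i : nrm (v i 0) <= nv v.
Proof. exact: (le_bigmax _ (fun i => nrm (v i 0))). Qed.

Lemma nrmv_le v b : 0 <= b -> (forall i, nrm (v i 0) <= b) -> nv v <= b.
Proof. by move=> b0 vb; apply/bigmax_leP. Qed.

Lemma nrmv_lt v e : 0 < e -> (forall i, nrm (v i 0) < e) -> nv v < e.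
Proof.
by move=> e0 ve; rewrite /nrmv; elim/big_ind: _ => // x y; rewrite gt_max => ->.
Qed.

Lemma nrmv0 : nv 0 = 0.
Proof. by apply/le_anti; rewrite nrmv_ge0 nrmv_le // => i; rewrite mxE nrm0. Qed.

Lemma nrmv_eq0 v : nv v = 0 -> v = 0.
Proof.
move=> v0; apply/matrixP => i j; rewrite ord1 mxE; apply: nrm_eq0.
by apply/le_anti; rewrite nrm_ge0 -v0 ler_nrmv.
Qed.

Lemma nrmvD v w : nv (v + w) <= Num.max (nv v) (nv w).
Proof.
apply: nrmv_le => [|i]; first by rewrite le_max nrmv_ge0.
rewrite mxE; apply: le_trans (nrmD _ _) _.
by rewrite ge_max !le_max !ler_nrmv orbT.
Qed.

Lemma nrmvN v : nv (- v) = nv v.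
Proof. by apply: eq_bigr => i _; rewrite mxE nrmN. Qed.

Lemma nrmvB v w : nv (v - w) <= Num.max (nv v) (nv w).
Proof. by rewrite -(nrmvN w) nrmvD. Qed.

Lemma nrmvDr_eq v w : nv w < nv v -> nv (v + w) = nv v.
Proof.
move=> wv; apply/le_anti; rewrite (le_trans (nrmvD _ _)) ?ge_max ?lexx ?(ltW wv) //=.
have := nrmvB (v + w) w; rewrite addrK le_max => /orP[] // vw.
by have := lt_le_trans wv vw; rewrite ltxx.
Qed.

Lemma nrmvZ c k v : 0 <= k -> (forall x, nrm (c * x) = k * nrm x) ->
  nv (c *: v) = k * nv v.
Proof.
move=> k0 ck; rewrite /nrmv.
rewrite (big_morph (fun x : R => k * x) (fun x y => maxr_pMr x y k0) (mulr0 k)).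
by apply: eq_bigr => i _; rewrite mxE ck.
Qed.

Lemma nrmv_eq0_le v : (forall e, 0 < e -> nv v <= e) -> v = 0.
Proof.
move=> ve; apply/nrmv_eq0/le_anti; rewrite nrmv_ge0 andbT.
by apply/ler_addgt0Pr => e e0; rewrite add0r ve.
Qed.

Lemma nrmv_le_lim (u : nat -> 'cV[K]_n) v b :
  (forall e, 0 < e -> exists N, forall i, (N <= i)%N -> nv (u i - v) < e) ->
  (forall i, nv (u i) <= b) -> nv v <= b.
Proof.
move=> uv ub; apply/ler_addgt0Pr => e e0; have [N HN] := uv e e0.
rewrite -[v](subKr (u N)).
apply: le_trans (nrmvB _ _) _; rewrite ge_max.
have := ub N; have := HN N (leqnn N); have := nrmv_ge0 (u N).
by move=> *; apply/andP; split; lra.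
Qed.

Lemma nrmv_complete : complete_for nrm -> complete_for nv.
Proof.
move=> nrm_complete u u_cauchy.
have coord_lim a : exists l : K, forall e, 0 < e -> exists N : nat,
    forall i : nat, (N <= i)%N -> nrm (u i a 0 - l) < e.
  apply: nrm_complete => e e0; have [N HN] := u_cauchy e e0.
  exists N => i j hi hj; apply: le_lt_trans (HN i j hi hj).
  by have := ler_nrmv (u i - u j) a; rewrite !mxE.
have [l Hl] := fin_all_exists coord_lim.
exists (\col_a l a) => e e0.
have [Nf HN] := fin_all_exists (fun a => Hl a e e0).
exists (\max_(a < n) Nf a)%N => i hi; apply: nrmv_lt => // a; rewrite !mxE.
by apply: HN; apply: leq_trans hi; apply: leq_bigmax.
Qed.

Lemma nrmv_geometric_cauchy (u : nat -> 'cV[K]_n) (r c : R) :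
  0 <= r < 1 -> 0 <= c -> (forall k, nv (u k.+1 - u k) <= r ^+ k * c) ->
  forall e, 0 < e -> exists N : nat, forall i j : nat,
    (N <= i)%N -> (N <= j)%N -> nv (u i - u j) < e.
Proof.
move=> r01 c0 uc e e0; have /andP[r0 r1] := r01.
have tail N k : nv (u (k + N)%N - u N) <= r ^+ N * c.
  elim: k => [|k IH]; first by rewrite add0n subrr nrmv0 mulr_ge0 ?exprn_ge0.
  rewrite addSn -[u _.+1](subrK (u (k + N)%N)) -addrA.
  apply: le_trans (nrmvD _ _) _; rewrite ge_max IH andbT.
  apply: le_trans (uc _) _; apply: ler_wpM2r => //.
  exact: (ler_wiXn2l r0 (ltW r1) (leq_addl _ _)).
have c1 : 0 < c + 1 by rewrite ltr_wpDl.
have [N rN] := exists_expr_lt r01 (divr_gt0 e0 c1).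
have rNc : r ^+ N * c < e.
  rewrite ltr_pdivlMr // in rN; apply: le_lt_trans rN.
  by apply: ler_wpM2l; rewrite ?exprn_ge0 ?lerDl.
exists N => i j hi hj.
have := tail N (i - N)%N; have := tail N (j - N)%N; rewrite !subnK // => tj ti.
have -> : u i - u j = (u i - u N) - (u j - u N) by rewrite opprB addrA subrK.
by apply: le_lt_trans (nrmvB _ _) _; rewrite gt_max !(le_lt_trans _ rNc).
Qed.

Definition mxnrm (A : 'M[K]_n) : R := \big[Num.max/0]_(k < n) nv (col k A).

Lemma mxnrm_ge0 A : 0 <= mxnrm A.
Proof.
rewrite /mxnrm; elim/big_ind: _ => // [x y|k _]; last exact: nrmv_ge0.
by rewrite le_max => ->.
Qed.

Lemma ler_mxnrm A i k : nrm (A i k) <= mxnrm A.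
Proof.
apply: le_trans (le_bigmax _ (fun k => nv (col k A)) k).
by have := ler_nrmv (col k A) i; rewrite mxE.
Qed.

Lemma mxnrm_le A b : 0 <= b -> (forall k, nv (col k A) <= b) -> mxnrm A <= b.
Proof. by move=> b0 Ab; apply/bigmax_leP. Qed.

Lemma nrmv_mulmx A v : nv (A *m v) <= mxnrm A * nv v.
Proof.
apply: nrmv_le => [|i]; first by rewrite mulr_ge0 ?mxnrm_ge0 ?nrmv_ge0.
rewrite mxE; elim/big_ind: _ => [|x y|k _].
- by rewrite nrm0 mulr_ge0 ?mxnrm_ge0 ?nrmv_ge0.
- by move=> xb yb; apply: le_trans (nrmD _ _) _; rewrite ge_max xb.
apply: le_trans (nrmM _ _) _.
by apply: ler_pM => //; [apply: ler_mxnrm | apply: ler_nrmv].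
Qed.

Let nrmX_le x m : nrm (x ^+ m.+1) <= nrm x ^+ m.+1.
Proof.
elim: m => [|m IH]; first by rewrite !expr1.
by rewrite exprS [_ ^+ m.+2]exprS; apply: le_trans (nrmM _ _) _; apply: ler_wpM2l.
Qed.

Lemma nrmv_map_exprSS v p : nv v <= 1 ->
  nv (map_mx (fun x => x ^+ p.+2) v) <= nv v ^+ 2.
Proof.
move=> v1; apply: nrmv_le => [|i]; first by rewrite exprn_ge0 ?nrmv_ge0.
have vi1 : nrm (v i 0) <= 1 := le_trans (ler_nrmv v i) v1.
rewrite mxE; apply: le_trans (nrmX_le _ _) _.
apply: le_trans (ler_wiXn2l (nrm_ge0 _) vi1 (isT : (2 <= p.+2)%N)) _.
by rewrite lerXn2r ?nnegrE ?nrm_ge0 ?nrmv_ge0 ?ler_nrmv.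
Qed.

End UltrametricSupNorm.

Arguments nrmv0 {R K nrm n}.

Section NearIdentityMap.
Variables (R : realType) (K : comUnitRingType) (nrm : K -> R) (n : nat).
Hypothesis Hnrm : ultrametric_abs nrm.
Local Notation nv := (@nrmv R K nrm n).
Implicit Types (x y w : 'cV[K]_n).
Variable Gamma : 'cV[K]_n -> 'cV[K]_n.
Hypothesis Gamma_add : forall x y, Gamma (x + y) = Gamma x + Gamma y.
Variables (s eps : R).
Hypothesis eps01 : 0 <= eps < 1.
Hypothesis Gamma_near_id : forall w, nv w <= s -> nv (Gamma w - w) <= eps * nv w.

Let Gamma0 : Gamma 0 = 0.
Proof. by apply: (addrI (Gamma 0)); rewrite -Gamma_add !addr0. Qed.

Let GammaB x y : Gamma (x - y) = Gamma x - Gamma y.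
Proof.
by apply/eqP; rewrite eq_sym subr_eq -Gamma_add subrK.
Qed.

Lemma near_id_nrmv w : nv w <= s -> nv (Gamma w) = nv w.
Proof.
move=> ws; have [/(nrmv_eq0 Hnrm) ->|w0] := eqVneq (nv w) 0; first by rewrite Gamma0.
have /andP[eps0 eps1] := eps01.
have w_gt0 : 0 < nv w by rewrite lt_neqAle eq_sym w0 nrmv_ge0.
have small : nv (Gamma w - w) < nv w.
  by apply: le_lt_trans (Gamma_near_id ws) _; rewrite gtr_pMl.
by rewrite -(nrmvDr_eq Hnrm small) addrC subrK.
Qed.

Lemma near_id_nrmvB x y : nv x <= s -> nv y <= s ->
  nv (Gamma x - Gamma y) = nv (x - y).
Proof.
move=> xs ys; rewrite -GammaB near_id_nrmv //.
by apply: le_trans (nrmvB Hnrm _ _) _; rewrite ge_max xs.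
Qed.

Lemma near_id_inj x y : nv x <= s -> nv y <= s -> Gamma x = Gamma y -> x = y.
Proof.
move=> xs ys Gxy; apply/eqP; rewrite -subr_eq0; apply/eqP/(nrmv_eq0 Hnrm).
by rewrite -near_id_nrmvB // Gxy subrr (nrmv0 Hnrm).
Qed.

Lemma near_id_surj : complete_for nrm ->
  forall y, nv y <= s -> exists2 x, nv x <= s & Gamma x = y.
Proof.
move=> nrm_complete y ys; have /andP[eps0 eps1] := eps01.
have s0 : 0 <= s := le_trans (nrmv_ge0 Hnrm y) ys.
pose x k := iter k (fun x => y - (Gamma x - x)) y.
have xS k : x k.+1 = y - (Gamma (x k) - x k) by [].
have x_ball k : nv (x k) <= s.
  elim: k => // k IH; rewrite xS; apply: le_trans (nrmvB Hnrm _ _) _.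
  rewrite ge_max ys; apply: le_trans (Gamma_near_id IH) _.
  by apply: le_trans IH; rewrite ler_piMl ?nrmv_ge0 ?ltW.
have x_step k : nv (x k.+1 - x k) <= eps ^+ k * s.
  elim: k => [|k IH].
    by rewrite expr0 mul1r; apply: le_trans (nrmvB Hnrm _ _) _; rewrite ge_max !x_ball.
  have -> : x k.+2 - x k.+1 = - (Gamma (x k.+1 - x k) - (x k.+1 - x k)).
    by rewrite GammaB [x k.+2]xS [in LHS]xS; apply/matrixP => a b; rewrite !mxE; ring.
  rewrite (nrmvN Hnrm); apply: le_trans (Gamma_near_id _) _.
    by apply: le_trans (nrmvB Hnrm _ _) _; rewrite ge_max !x_ball.
  by rewrite exprS -mulrA ler_wpM2l.
have [L xL] := nrmv_complete nrm_complete
  (nrmv_geometric_cauchy Hnrm eps01 s0 x_step).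
have Ls : nv L <= s := nrmv_le_lim Hnrm xL x_ball.
exists L => //; apply/eqP; rewrite -subr_eq0; apply/eqP/(nrmv_eq0_le Hnrm) => e e0.
have [N xNL] := xL e e0.
have -> : Gamma L - y = (x N - L) - (x N.+1 - L) - (Gamma (x N) - Gamma L).
  by rewrite xS; apply/matrixP => a b; rewrite !mxE; ring.
apply: le_trans (nrmvB Hnrm _ _) _; rewrite near_id_nrmvB //.
rewrite ge_max (ltW (xNL N (leqnn N))) andbT.
apply: le_trans (nrmvB Hnrm _ _) _.
by rewrite ge_max !ltW ?xNL.
Qed.

End NearIdentityMap.

Section PowerSeriesNearIdentity.
Variables (R : realType) (K : comUnitRingType) (nrm : K -> R) (n : nat).
Hypothesis Hnrm : ultrametric_abs nrm.
Local Notation nv := (@nrmv R K nrm n).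
Local Notation mxnrm := (@mxnrm R K nrm n).
Variables (Gamma : 'cV[K]_n -> 'cV[K]_n) (D : nat -> 'M[K]_n) (p : nat).
Hypothesis p_gt1 : (1 < p)%N.
Local Notation frob i z := (map_mx (fun x => x ^+ (p ^ i)) z).
Local Notation partial_sum z m := (\sum_(1 <= i < m.+1) D i *m frob i z).
Hypothesis Gamma_series : forall z e, 0 < e -> exists m0 : nat,
  forall m : nat, (m0 <= m)%N -> nv (Gamma z - (z + partial_sum z m)) < e.

Lemma series_term_cvg0 z e : 0 < e ->
  exists m0 : nat, forall m : nat, (m0 <= m)%N -> nv (D m.+1 *m frob m.+1 z) < e.
Proof.
move=> e0; have [m0 Hm] := Gamma_series z e0; exists m0 => m m0m.
have := Hm m.+1 (leqW m0m); rewrite (big_nat_recr m.+1) //=.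
set S := partial_sum z m; set T := D m.+1 *m _ => ST.
have -> : T = (Gamma z - (z + S)) - (Gamma z - (z + (S + T))).
  by rewrite opprB addrA (addrA z S T) subrKA addrC addKr.
by apply: le_lt_trans (nrmvB Hnrm _ _) _; rewrite gt_max Hm.
Qed.

Lemma coef_mxnrm_eventually_le1 :
  exists J : nat, forall m : nat, (J <= m)%N -> mxnrm (D m.+1) <= 1.
Proof.
have col_small k : exists m0 : nat, forall m : nat, (m0 <= m)%N ->
    nv (col k (D m.+1)) < 1.
  have [m0 Hm] := series_term_cvg0 (delta_mx k 0) ltr01; exists m0 => m m0m.
  suff frob_delta : frob m.+1 (delta_mx k 0 : 'cV[K]_n) = delta_mx k 0.
    by rewrite colE -frob_delta Hm.
  apply/matrixP => a b; rewrite !mxE; case: (_ && _); first by rewrite expr1n.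
  by rewrite expr0n expn_eq0 -leqn0 leqNgt (ltnW p_gt1).
have [Jf HJ] := fin_all_exists col_small.
exists (\max_(k < n) Jf k)%N => m Jm; apply: mxnrm_le => // k.
by apply/ltW/HJ/(leq_trans _ Jm)/leq_bigmax.
Qed.

Lemma coef_mxnrm_bounded :
  exists2 B, 0 < B & forall j : nat, (0 < j)%N -> mxnrm (D j) <= B.
Proof.
have [J HJ] := coef_mxnrm_eventually_le1.
pose B := Num.max 1 (\big[Num.max/0]_(j < J.+2) mxnrm (D j)).
exists B => [|[//|m] _]; first by rewrite lt_max ltr01.
have [mJ|Jm] := ltnP m.+1 J.+2.
  apply: le_trans (le_bigmax 0 (fun j : 'I_J.+2 => mxnrm (D j)) (Ordinal mJ)) _.
  by rewrite le_max lexx orbT.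
by apply: le_trans (HJ m _) _; rewrite ?le_max ?lexx // -ltnS ltnW.
Qed.

Lemma series_near_id eps : 0 < eps -> exists2 s, 0 < s &
  forall w, nv w <= s -> nv (Gamma w - w) <= eps * nv w.
Proof.
move=> eps0; have [B B0 DB] := coef_mxnrm_bounded.
exists (Num.min 1 (eps / B)); first by rewrite lt_min ltr01 divr_gt0.
move=> w; rewrite le_min => /andP[w1 wB].
have term_le j : (0 < j)%N -> nv (D j *m frob j w) <= eps * nv w.
  move=> j0; have : (1 < p ^ j)%N by rewrite -{1}(expn0 p) ltn_exp2l.
  case: (p ^ j)%N => [|[|k]] // _.
  apply: le_trans (nrmv_mulmx Hnrm _ _) _.
  apply: le_trans (ler_pM (mxnrm_ge0 Hnrm _) (nrmv_ge0 Hnrm _) (DB j j0)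
    (nrmv_map_exprSS Hnrm k w1)) _.
  rewrite expr2 mulrA; apply: ler_wpM2r; first exact: nrmv_ge0.
  by rewrite mulrC -ler_pdivlMr.
have sum_le m : nv (partial_sum w m) <= eps * nv w.
  rewrite big_nat_cond; elim/big_ind: _ => [|x y xb yb|i /andP[/andP[i0 _] _]].
  - by rewrite (nrmv0 Hnrm) mulr_ge0 ?nrmv_ge0 ?ltW.
  - by apply: le_trans (nrmvD Hnrm _ _) _; rewrite ge_max xb.
  - exact: term_le.
apply: (nrmv_le_lim Hnrm (u := fun m => partial_sum w m)) sum_le => e e0.
have [m0 Hm] := Gamma_series w e0; exists m0 => m m0m.
by rewrite -(nrmvN Hnrm) opprB -addrA -opprD Hm.
Qed.

End PowerSeriesNearIdentity.

Lemma qF_gt1 (Fq : finFieldType) : (1 < qF Fq)%N.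
Proof. exact: card_finNzRing_gt1. Qed.

Section CompletedSetting.
Variables (Fq : finFieldType) (R : realType) (kinf : fieldType)
  (Kinf : comUnitRingType) (gT : finGroupType)
  (cF : {rmorphism Fq -> kinf}) (emb : {rmorphism kinf -> Kinf})
  (tk : kinf) (nrm : Kinf -> R) (actK : gT -> {rmorphism Kinf -> Kinf}) (d : nat).
Hypothesis Hset : setting_axioms cF emb tk nrm actK d.
Local Notation q := ((qF Fq)%:R : R).
Local Notation t := (tK emb tk).

Let q_gt1 : 1 < q. Proof. by rewrite ltr1n qF_gt1. Qed.
Let q_neq0 : q != 0. Proof. by rewrite gt_eqF // (lt_trans ltr01 q_gt1). Qed.

Lemma setting_ultrametric : ultrametric_abs nrm.
Proof.
have [[nrm_def nrmD nrm_embM nrmM nrmX] _ _] := Hset.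
have nrm1 : nrm 1 = 1.
  have nrm1_neq0 : nrm 1 != 0 by apply/eqP => /(nrm_def 1).2/eqP; rewrite oner_eq0.
  by apply: (mulfI nrm1_neq0); rewrite mulr1 -expr2 -nrmX expr1n.
have nrmN1 : nrm (-1) = 1.
  have /eqP := nrmX (-1) 1; rewrite sqrrN expr1n nrm1 eq_sym sqrf_eq1.
  case/orP => /eqP // nrmN1; have [nrmN1_ge0 _] := nrm_def (-1).
  by move: nrmN1_ge0; rewrite nrmN1 ler0N1.
split=> // [x|x|x]; try by case: (nrm_def x).
by rewrite -mulN1r -(rmorphN1 emb) nrm_embM /absk rmorphN1 nrmN1 mul1r.
Qed.

Lemma setting_complete : complete_for nrm.
Proof. by have [_ _ []] := Hset. Qed.

Lemma nrm_tM x : nrm (t * x) = q * nrm x.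
Proof. by have [[_ _ -> _ _] [-> _ _] _] := Hset. Qed.

Lemma tK_unit : t \is a GRing.unit.
Proof.
have [[nrm_def _ _ _ _] [nrm_tk _ _] _] := Hset.
rewrite rmorph_unit // unitfE; apply/eqP => tk0; move: nrm_tk.
by rewrite /absk tk0 rmorph0 ((nrm_def 0).2.2 erefl) => /esym/eqP; apply/negP.
Qed.

Lemma nrm_tzM (z : int) x : nrm (t ^ z * x) = q ^ z * nrm x.
Proof.
have nrm_tnM m y : nrm (t ^+ m * y) = q ^+ m * nrm y.
  elim: m y => [|m IH] y; first by rewrite !expr0 !mul1r.
  by rewrite exprS -mulrA nrm_tM IH exprS mulrA.
case: z => m; first exact: nrm_tnM.
have := nrm_tnM m.+1 ((t ^+ m.+1)^-1 * x).
rewrite mulrA mulrV ?unitrX ?tK_unit // mul1r => ->.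
by rewrite mulrA mulVf ?mul1r // expf_neq0.
Qed.

Lemma tballE n (i : int) (v : 'cV[Kinf]_n) :
  tball emb tk nrm i v <-> nrmv nrm v <= q ^ (- i).
Proof.
have q0 : 0 <= q by [].
have nrmv_tzZ (z : int) (w : 'cV[Kinf]_n) : nrmv nrm (t ^ z *: w) = q ^ z * nrmv nrm w.
  by apply: nrmvZ; [apply: exprz_ge0 | apply: nrm_tzM].
split=> [[y [y1 ->]]|vi].
  by rewrite nrmv_tzZ ler_piMr ?exprz_ge0.
exists (t ^ i *: v); split; last by rewrite scalerA -exprzDr ?tK_unit // addNr scale1r.
rewrite nrmv_tzZ; apply: le_trans (ler_wpM2l (exprz_ge0 _ q0) vi) _.
by rewrite -exprzDr ?subrr // unitfE.
Qed.

Lemma tball_le n (i j : int) (v : 'cV[Kinf]_n) :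
  i <= j -> tball emb tk nrm j v -> tball emb tk nrm i v.
Proof.
move=> ij /tballE vj; apply/tballE; apply: le_trans vj _.
by apply: (ler_weXz2l (ltW q_gt1)); rewrite lerN2.
Qed.

End CompletedSetting.
Theorem mainTheorem13
  (Fq : finFieldType) (R : realType) (kinf : fieldType)
  (Kinf : comUnitRingType) (gT : finGroupType)
  (cF : {rmorphism Fq -> kinf}) (emb : {rmorphism kinf -> Kinf})
  (tk : kinf) (nrm : Kinf -> R) (actK : gT -> {rmorphism Kinf -> Kinf})
  (n d : nat) (Nmat : 'M[Kinf]_n)
  (Hset : setting_axioms cF emb tk nrm actK d)
  (HE : tmodule_axioms actK Nmat)
  (* the two modules of the class C *)
  (M1 M2 : topologicalZmodType)
  (aM1 : {poly Fq} -> M1 -> M1) (aM2 : {poly Fq} -> M2 -> M2)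
  (actM1 : gT -> M1 -> M1) (actM2 : gT -> M2 -> M2)
  (iota1 : 'cV[Kinf]_n -> M1) (iota2 : 'cV[Kinf]_n -> M2)
  (L1 L2 : 'cV[Kinf]_n -> Prop)
  (HM1 : in_class_C cF emb tk nrm actK d Nmat aM1 actM1 iota1 L1)
  (HM2 : in_class_C cF emb tk nrm actK d Nmat aM2 actM2 iota2 L2)
  (* l with t^{-l} O^n  meeting L1 and L2 trivially *)
  (l : int)
  (Hl1 : forall v, tball emb tk nrm l v -> L1 v -> v = 0)
  (Hl2 : forall v, tball emb tk nrm l v -> L2 v -> v = 0)
  (* Gamma(z) = z + D_1 z^(1) + D_2 z^(2) + ..., everywhere convergent *)
  (Gamma : 'cV[Kinf]_n -> 'cV[Kinf]_n) (D : nat -> 'M[Kinf]_n)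
  (HGconv : forall z : 'cV[Kinf]_n, forall e : R, 0 < e ->
     exists m0 : nat, forall m : nat, (m0 <= m)%N ->
       nrmv nrm (Gamma z - (z + \sum_(1 <= i < m.+1)
                   D i *m map_mx (fun x => x ^+ (qF Fq ^ i)) z)) < e)
  (* Gamma is F_q[G]-linear *)
  (HGadd : forall x y, Gamma (x + y) = Gamma x + Gamma y)
  (HGlin : forall (c : Fq) x, Gamma (emb (cF c) *: x) = emb (cF c) *: Gamma x)
  (HGG : forall g x, Gamma (gv actK g x) = gv actK g (Gamma x))
  (HGL : forall v, L1 v -> L2 (Gamma v))
  (* gamma : M1 -> M2 continuous F_q[G]-linear *)
  (gamma : M1 -> M2) (Hgcont : continuous gamma)
  (Hgadd : forall x y, gamma (x + y) = gamma x + gamma y)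
  (Hglin : forall (c : Fq) x, gamma (aM1 c%:P x) = aM2 c%:P (gamma x))
  (HgG : forall g x, gamma (actM1 g x) = actM2 g (gamma x))
  (* iota2^{-1} o gamma o iota1 = induced map of Gamma on t^{-l} O^n *)
  (Hgam : forall x, tball emb tk nrm l x -> gamma (iota1 x) = iota2 (Gamma x)) :
  inf_tangent Fq emb tk nrm iota1 iota2 l gamma.
Proof.
have Hnrm := setting_ultrametric Hset.
have ballE := tballE Hset.
have q_gt1 : 1 < (qF Fq)%:R :> R by rewrite ltr1n qF_gt1.
have q0 : 0 < (qF Fq)%:R :> R := lt_trans ltr01 q_gt1.
(* eps = q^-N would fail eps < 1 when N = 0. *)
move=> N; pose eps : R := (qF Fq)%:R ^- N.+1.
have eps0 : 0 < eps by rewrite invr_gt0 exprn_gt0.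
have eps1 : eps < 1 by rewrite invf_lt1 ?exprn_gt0 ?exprn_egt1.
have epsN : eps <= (qF Fq)%:R ^- N by rewrite lef_pV2 ?posrE ?exprn_gt0 ?ler_eXn2l // ltW.
have [s s0 near_id_s] := series_near_id Hnrm (qF_gt1 Fq) HGconv eps0.
have [i [li qis]] := exists_exprz_le l q_gt1 s0.
have near_id w : nrmv nrm w <= (qF Fq)%:R ^ (- i) ->
    nrmv nrm (Gamma w - w) <= eps * nrmv nrm w.
  by move=> wi; apply/near_id_s/(le_trans wi).
have eps01 : 0 <= eps < 1 by rewrite ltW.
exists i; split=> //; exists Gamma; split.
- move=> x /[dup] xi /ballE xi'; split; last exact/Hgam/(tball_le Hset li).
  by apply/ballE; rewrite (near_id_nrmv Hnrm HGadd eps01 near_id).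
- by move=> x y /ballE xi /ballE yi; apply: (near_id_inj Hnrm HGadd eps01 near_id).
- move=> y /ballE yi.
  have [x xi <-] := near_id_surj Hnrm HGadd eps01 near_id (setting_complete Hset) yi.
  by exists x => //; apply/ballE.
- by move=> x y /ballE xi /ballE yi; apply: (near_id_nrmvB Hnrm HGadd eps01 near_id).
- move=> x /ballE xi; apply: le_trans (near_id _ xi) _.
  by apply: ler_wpM2r; rewrite ?nrmv_ge0.
Qed.
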